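(* Let $D\subset\mathbb{R}^2$ be a simply connected domain, let $\mu\neq\theta$ be real constants, and let $v=(v^1,v^2),\,w=(w^1,w^2)\colon D\to\mathbb{R}^2$ be smooth maps satisfying on $D$ the system $$\begin{cases} w^1_{10}v^2_{01}-w^1_{01}v^2_{10}-w^2_{10}v^1_{01}+w^2_{01}v^1_{10}=0,\\ w^2_{10}v^2_{01}-w^2_{01}v^2_{10}+w^1_{10}v^1_{01}-w^1_{01}v^1_{10}=0,\end{cases}$$ and $\det(dv)+\det(dw)\neq 0$ on $D$. Let $$\varphi(t,\alpha)=M_1(t)v(\alpha)+M_2(t)w(\alpha),\quad M_1(t)=\begin{pmatrix}\cos\mu t&-\sin\mu t\\ \sin\mu t&\cos\mu t\end{pmatrix},\ M_2(t)=\begin{pmatrix}\cos\theta t&-\sin\theta t\\ \sin\theta t&\cos\theta t\end{pmatrix}.$$ Then $\det(d\varphi^t)=\det(dv)+\det(dw)$ for all $t$ (in particular it is independent of $t$ and nonzero), and there exists a scalar function $p(t,\alpha)$ with $(d\varphi^t)^T\varphi''+\nabla_\alpha p=0$ on $D$ for all $t$; i.e. $\varphi$ is a (local) solution of the Lagrangian incompressible Euler equations.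
   Context: Jet notation: for a function $f$ of $\alpha=(\alpha_1,\alpha_2)$, $f_{10}=\partial f/\partial\alpha_1$ and $f_{01}=\partial f/\partial\alpha_2$. For $\varphi(t,\alpha)=\varphi^t(\alpha)$, primes denote derivatives in $t$, $d\varphi^t$ is the Jacobian in $\alpha$, $\nabla_\alpha$ the gradient in $\alpha$. *)

From Stdlib Require Import Reals Lra.
Open Scope R_scope.

Definition open2 (D : R -> R -> Prop) : Prop :=
  forall x y, D x y -> exists e, 0 < e /\
    forall x' y', Rabs (x' - x) < e -> Rabs (y' - y) < e -> D x' y'.

Definition dist2 (p q : R * R) : R :=
  Rmax (Rabs (fst p - fst q)) (Rabs (snd p - snd q)).

Definition cont_path (g : R -> R * R) : Prop :=
  forall s, 0 <= s <= 1 -> forall eps, 0 < eps -> exists delta, 0 < delta /\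
    forall s', 0 <= s' <= 1 -> Rabs (s' - s) < delta -> dist2 (g s') (g s) < eps.

Definition cont_square (H : R -> R -> R * R) : Prop :=
  forall u s, 0 <= u <= 1 -> 0 <= s <= 1 -> forall eps, 0 < eps ->
    exists delta, 0 < delta /\
    forall u' s', 0 <= u' <= 1 -> 0 <= s' <= 1 ->
      Rabs (u' - u) < delta -> Rabs (s' - s) < delta ->
      dist2 (H u' s') (H u s) < eps.

Definition path_in (D : R -> R -> Prop) (g : R -> R * R) : Prop :=
  cont_path g /\ forall s, 0 <= s <= 1 -> D (fst (g s)) (snd (g s)).

Definition domain2 (D : R -> R -> Prop) : Prop :=
  open2 D /\ (exists x y, D x y) /\
  forall x1 y1 x2 y2, D x1 y1 -> D x2 y2 ->
    exists g, path_in D g /\ g 0 = (x1, y1) /\ g 1 = (x2, y2).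

Definition simply_connected_domain (D : R -> R -> Prop) : Prop :=
  domain2 D /\
  forall g, path_in D g -> g 0 = g 1 ->
    exists H : R -> R -> R * R, cont_square H /\
      (forall u s, 0 <= u <= 1 -> 0 <= s <= 1 -> D (fst (H u s)) (snd (H u s))) /\
      (forall s, 0 <= s <= 1 -> H 0 s = g s) /\
      (forall s, 0 <= s <= 1 -> H 1 s = g 0) /\
      (forall u, 0 <= u <= 1 -> H u 0 = g 0 /\ H u 1 = g 0).

Definition has_d10_at (f : R -> R -> R) (a1 a2 l : R) : Prop :=
  derivable_pt_lim (fun x => f x a2) a1 l.
Definition has_d01_at (f : R -> R -> R) (a1 a2 l : R) : Prop :=
  derivable_pt_lim (fun y => f a1 y) a2 l.

Definition is_d10_on (D : R -> R -> Prop) (f g : R -> R -> R) : Prop :=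
  forall a1 a2, D a1 a2 -> has_d10_at f a1 a2 (g a1 a2).
Definition is_d01_on (D : R -> R -> Prop) (f g : R -> R -> R) : Prop :=
  forall a1 a2, D a1 a2 -> has_d01_at f a1 a2 (g a1 a2).

Definition cont_on (D : R -> R -> Prop) (f : R -> R -> R) : Prop :=
  forall a1 a2, D a1 a2 -> forall eps, 0 < eps -> exists delta, 0 < delta /\
    forall b1 b2, Rabs (b1 - a1) < delta -> Rabs (b2 - a2) < delta ->
      Rabs (f b1 b2 - f a1 a2) < eps.

Fixpoint Ck (k : nat) (D : R -> R -> Prop) (f : R -> R -> R) : Prop :=
  match k with
  | O => cont_on D f
  | S k' => cont_on D f /\ exists g1 g2, is_d10_on D f g1 /\ is_d01_on D f g2 /\
                         Ck k' D g1 /\ Ck k' D g2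
  end.

Definition smooth_on (D : R -> R -> Prop) (f : R -> R -> R) : Prop :=
  forall k, Ck k D f.

Definition phi1 (mu theta : R) (v1 v2 w1 w2 : R -> R -> R) (t a1 a2 : R) : R :=
  cos (mu * t) * v1 a1 a2 - sin (mu * t) * v2 a1 a2
  + (cos (theta * t) * w1 a1 a2 - sin (theta * t) * w2 a1 a2).
Definition phi2 (mu theta : R) (v1 v2 w1 w2 : R -> R -> R) (t a1 a2 : R) : R :=
  sin (mu * t) * v1 a1 a2 + cos (mu * t) * v2 a1 a2
  + (sin (theta * t) * w1 a1 a2 + cos (theta * t) * w2 a1 a2).

Definition has_second_deriv (f : R -> R) (t l : R) : Prop :=
  exists g : R -> R, (forall s, derivable_pt_lim f s (g s)) /\ derivable_pt_lim g t l.

From Stdlib Require Import Reals Lra Lia Arith Classical ClassicalEpsilon.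
From Coquelicot Require Import Coquelicot.
Open Scope R_scope.

(* The Jacobian identity is algebra: det (d phi^t) is det dv + det dw plus cos ((theta - mu) t) and
   sin ((theta - mu) t) times the two left-hand sides of the system. For the pressure,
   phi'' = - mu^2 M1 v - theta^2 M2 w and M1, M2 are rotations, so - (d phi^t)^T phi'' is the gradient of
   mu^2 |v|^2 / 2 + theta^2 |w|^2 / 2 + mu^2 (M1 v . M2 w) plus (theta^2 - mu^2) times the 1-form
   cos ((theta - mu) t) w . dv + sin ((theta - mu) t) (J w) . dv, J the rotation by a right angle.
   The system says exactly that w . dv and (J w) . dv are closed, and closed forms on a simply connected
   domain are exact.
   For the latter, corner integrals are primitives on squares inside D. Summing their increments along a
   fine partition of a path from a base point gives a potential: refinement does not change the sum, and a
   loop has sum zero because a null-homotopy, cut along a grid finer than a Lebesgue number, is a union of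
   cells each lying in such a square. *)

Lemma Rabs_between_lt a u v t r :
  Rabs (u - a) < r -> Rabs (v - a) < r -> Rmin u v <= t <= Rmax u v -> Rabs (t - a) < r.
Proof.
  intros Hu Hv [H1 H2]. unfold Rmin, Rmax in *.
  apply Rabs_def2 in Hu. apply Rabs_def2 in Hv.
  destruct (Rle_dec u v); apply Rabs_def1; lra.
Qed.

Lemma Rabs_sub_lt a b c r1 r2 : Rabs (a - b) < r1 -> Rabs (b - c) < r2 -> Rabs (a - c) < r1 + r2.
Proof.
  intros h1 h2. replace (a - c) with ((a - b) + (b - c)) by ring.
  eapply Rle_lt_trans; [apply Rabs_triang | lra].
Qed.

Lemma locally_Rabs_lt (x e : R) (Pr : R -> Prop) :
  0 < e -> (forall y, Rabs (y - x) < e -> Pr y) -> locally x Pr.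
Proof. intros he H. exists (mkposreal e he). exact H. Qed.

Lemma derivable_pt_lim_loc_ext (h k : R -> R) x l e :
  0 < e -> (forall t, Rabs (t - x) < e -> h t = k t) ->
  derivable_pt_lim h x l -> derivable_pt_lim k x l /\ Derive k x = l.
Proof.
  intros he Hk Hd. assert (H : is_derive k x l).
  { apply (is_derive_ext_loc h); [exact (locally_Rabs_lt x e _ he Hk) |].
    apply is_derive_Reals. exact Hd. }
  split; [apply is_derive_Reals; exact H | apply is_derive_unique; exact H].
Qed.

Lemma derive_zero_eq (g : R -> R) a b :
  (forall t, Rmin a b <= t <= Rmax a b -> derivable_pt_lim g t 0) -> g a = g b.
Proof.
  intros H.
  assert (Hi : is_RInt (fun _ => 0) a b (minus (g b) (g a))).
  { apply (is_RInt_derive g (fun _ => 0)).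
    - intros x Hx. apply is_derive_Reals, H, Hx.
    - intros x _. apply continuous_const. }
  assert (E := is_RInt_unique _ _ _ _ Hi).
  rewrite (is_RInt_unique _ _ _ _ (is_RInt_const a b 0)) in E.
  unfold scal, minus, plus, opp in E; simpl in E. unfold mult in E; simpl in E. lra.
Qed.

Section Continuity.
Variable D : R -> R -> Prop.

Lemma cont_on_continuous_1 f a b : cont_on D f -> D a b -> continuous (fun x => f x b) a.
Proof.
  intros cf Dab. apply filterlim_locally. intros eps.
  destruct (cf a b Dab eps (cond_pos eps)) as [d [dp H]].
  exists (mkposreal d dp). intros x Hx. apply H; [exact Hx |].
  rewrite Rminus_diag, Rabs_R0; exact dp.
Qed.

Lemma cont_on_continuous_2 f a b : cont_on D f -> D a b -> continuous (fun y => f a y) b.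
Proof.
  intros cf Dab. apply filterlim_locally. intros eps.
  destruct (cf a b Dab eps (cond_pos eps)) as [d [dp H]].
  exists (mkposreal d dp). intros y Hy. apply H; [| exact Hy].
  rewrite Rminus_diag, Rabs_R0; exact dp.
Qed.

Lemma cont_on_continuity_2d f a b : cont_on D f -> D a b -> continuity_2d_pt f a b.
Proof.
  intros cf Dab eps. destruct (cf a b Dab eps (cond_pos eps)) as [d [hd H]].
  exists (mkposreal d hd). exact H.
Qed.

Lemma cont_on_of_continuity_2d f : (forall a b, D a b -> continuity_2d_pt f a b) -> cont_on D f.
Proof.
  intros H a b Dab eps he. destruct (H a b Dab (mkposreal eps he)) as [d Hd].
  exists d. split; [apply cond_pos | exact Hd].
Qed.

Lemma cont_on_plus f g : cont_on D f -> cont_on D g -> cont_on D (fun x y => f x y + g x y).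
Proof.
  intros hf hg. apply cont_on_of_continuity_2d. intros a b Dab.
  apply continuity_2d_pt_plus; apply cont_on_continuity_2d; assumption.
Qed.

Lemma cont_on_mult f g : cont_on D f -> cont_on D g -> cont_on D (fun x y => f x y * g x y).
Proof.
  intros hf hg. apply cont_on_of_continuity_2d. intros a b Dab.
  apply continuity_2d_pt_mult; apply cont_on_continuity_2d; assumption.
Qed.

Lemma cont_on_opp f : cont_on D f -> cont_on D (fun x y => - f x y).
Proof.
  intros hf. apply cont_on_of_continuity_2d. intros a b Dab.
  apply continuity_2d_pt_opp; apply cont_on_continuity_2d; assumption.
Qed.

Lemma cont_on_ext f g : open2 D -> cont_on D g -> (forall a b, D a b -> f a b = g a b) -> cont_on D f.
Proof.
  intros o cg E a b Dab eps he. destruct (o a b Dab) as [e [hee HE]].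
  destruct (cg a b Dab eps he) as [d [hd Hd]]. exists (Rmin d e). split; [apply Rmin_pos; lra |].
  intros b1 b2 h1 h2.
  assert (Hmin := conj (Rmin_l d e) (Rmin_r d e)).
  rewrite (E b1 b2 (HE b1 b2 ltac:(lra) ltac:(lra))), (E a b Dab). apply Hd; lra.
Qed.

End Continuity.

Lemma continuity_2d_pt_loc_ext (g h : R -> R -> R) x y rho : 0 < rho ->
  (forall u v, Rabs (u - x) < rho -> Rabs (v - y) < rho -> g u v = h u v) ->
  continuity_2d_pt h x y -> continuity_2d_pt g x y.
Proof.
  intros hr He Hc eps. destruct (Hc eps) as [d H].
  assert (hm : 0 < Rmin d rho) by (apply Rmin_pos; [apply cond_pos | exact hr]).
  exists (mkposreal _ hm). simpl. intros u v Hu Hv.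
  assert (Hmin := conj (Rmin_l d rho) (Rmin_r d rho)).
  rewrite (He u v), (He x y) by (rewrite ?Rminus_diag, ?Rabs_R0; lra).
  apply H; lra.
Qed.

(** * Squares *)

Definition in_square (c : R * R) (r : R) (z : R * R) : Prop :=
  Rabs (fst z - fst c) < r /\ Rabs (snd z - snd c) < r.

Definition square_in (D : R -> R -> Prop) (c : R * R) (r : R) : Prop :=
  0 < r /\ forall z, in_square c r z -> D (fst z) (snd z).

Lemma in_square_center c r : 0 < r -> in_square c r c.
Proof. intros hr. unfold in_square. rewrite !Rminus_diag, Rabs_R0. lra. Qed.

Lemma in_square_pos c r z : in_square c r z -> 0 < r.
Proof. intros [h _]. assert (0 <= Rabs (fst z - fst c)) by apply Rabs_pos. lra. Qed.

Lemma in_square_trans c z w r r' : in_square c r z -> in_square z r' w -> in_square c (r' + r) w.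
Proof. intros [h1 h2] [h3 h4]. split; eapply Rabs_sub_lt; eassumption. Qed.

Lemma in_square_sym c z r : in_square c r z -> in_square z r c.
Proof. intros [h1 h2]. split; rewrite Rabs_minus_sym; assumption. Qed.

Lemma in_square_weaken c z r r' : r <= r' -> in_square c r z -> in_square c r' z.
Proof. intros h [h1 h2]. split; lra. Qed.

Lemma in_square_open c r z : in_square c r z ->
  exists e, 0 < e /\ forall w, in_square z e w -> in_square c r w.
Proof.
  intros [h1 h2]. exists (Rmin (r - Rabs (fst z - fst c)) (r - Rabs (snd z - snd c))).
  assert (Hmin := conj (Rmin_l (r - Rabs (fst z - fst c)) (r - Rabs (snd z - snd c)))
                       (Rmin_r (r - Rabs (fst z - fst c)) (r - Rabs (snd z - snd c)))).
  split; [apply Rmin_pos; lra |].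
  intros w [h3 h4].
  assert (t1 := Rabs_triang (fst w - fst z) (fst z - fst c)).
  assert (t2 := Rabs_triang (snd w - snd z) (snd z - snd c)).
  replace (fst w - fst z + (fst z - fst c)) with (fst w - fst c) in t1 by ring.
  replace (snd w - snd z + (snd z - snd c)) with (snd w - snd c) in t2 by ring.
  split; lra.
Qed.

Lemma square_in_open D x y : open2 D -> D x y -> exists r, square_in D (x, y) r.
Proof.
  intros o Dxy. destruct (o x y Dxy) as [e [he HE]].
  exists e. split; [exact he |]. intros z [h1 h2]. apply HE; assumption.
Qed.

Lemma in_square_vertical c r x y s : in_square c r (x, y) ->
  Rmin (snd c) y <= s <= Rmax (snd c) y -> in_square c r (x, s).
Proof.
  intros hz hs. assert (hr := in_square_pos _ _ _ hz). destruct hz as [h1 h2].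
  split; [exact h1 |]. simpl in *. apply (Rabs_between_lt _ (snd c) y); [| exact h2 | exact hs].
  rewrite Rminus_diag, Rabs_R0. exact hr.
Qed.

Lemma in_square_horizontal c r x s : 0 < r -> Rabs (x - fst c) < r ->
  Rmin (fst c) x <= s <= Rmax (fst c) x -> in_square c r (s, snd c).
Proof.
  intros hr hx hs. split; simpl.
  - apply (Rabs_between_lt _ (fst c) x); [rewrite Rminus_diag, Rabs_R0 | |]; assumption.
  - rewrite Rminus_diag, Rabs_R0. exact hr.
Qed.

Lemma same_partials_diff_eq (P Q f g : R -> R -> R) c r :
  (forall x y, in_square c r (x, y) -> has_d10_at f x y (P x y) /\ has_d01_at f x y (Q x y)) ->
  (forall x y, in_square c r (x, y) -> has_d10_at g x y (P x y) /\ has_d01_at g x y (Q x y)) ->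
  forall z z', in_square c r z -> in_square c r z' ->
  f (fst z') (snd z') - f (fst z) (snd z) = g (fst z') (snd z') - g (fst z) (snd z).
Proof.
  intros Hf Hg [x y] [x' y'] [hx hy] [hx' hy']; simpl in *.
  set (h := fun u v => f u v - g u v).
  assert (E1 : h x y = h x' y).
  { apply (derive_zero_eq (fun u => h u y)). intros t Ht.
    assert (ht : in_square c r (t, y)) by (split; [apply (Rabs_between_lt _ x x') |]; assumption).
    replace 0 with (P t y - P t y) by ring.
    apply derivable_pt_lim_minus; [apply (Hf t y ht) | apply (Hg t y ht)]. }
  assert (E2 : h x' y = h x' y').
  { apply (derive_zero_eq (fun v => h x' v)). intros t Ht.
    assert (ht : in_square c r (x', t)) by (split; [| apply (Rabs_between_lt _ y y')]; assumption).
    replace 0 with (Q x' t - Q x' t) by ring.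
    apply derivable_pt_lim_minus; [apply (Hf x' t ht) | apply (Hg x' t ht)]. }
  unfold h in *. lra.
Qed.

(** * A Lebesgue number lemma *)

Lemma INR_le_pow2 n : INR n <= 2 ^ n.
Proof.
  induction n as [| n IH]; [simpl; lra |]. rewrite S_INR. simpl.
  assert (1 <= 2 ^ n) by (apply pow_R1_Rle; lra). lra.
Qed.

Lemma inv_pow2_lt e : 0 < e -> exists n, / 2 ^ n < e.
Proof.
  intros he. destruct (archimed_cor1 e he) as [N [HN HN0]]. exists N.
  eapply Rle_lt_trans; [| exact HN]. apply Rinv_le_contravar; [apply lt_0_INR, HN0 | apply INR_le_pow2].
Qed.

Lemma inv_pow2_S n : / 2 ^ S n = / 2 ^ n / 2.
Proof. simpl. assert (0 < 2 ^ n) by (apply pow_lt; lra). field. lra. Qed.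

Lemma inv_pow2_pos n : 0 < / 2 ^ n.
Proof. apply Rinv_0_lt_compat, pow_lt. lra. Qed.

Lemma nested_intervals (a w : nat -> R) :
  (forall n, a n <= a (S n)) -> (forall n, a (S n) + w (S n) <= a n + w n) -> (forall n, 0 <= w n) ->
  exists l, forall n, a n <= l <= a n + w n.
Proof.
  intros h1 h2 h3.
  assert (inv : forall n k, a n <= a (n + k)%nat /\ a (n + k)%nat + w (n + k)%nat <= a n + w n).
  { intros n k. induction k as [| k IH]; [rewrite Nat.add_0_r; lra |].
    rewrite Nat.add_succ_r. specialize (h1 (n + k)%nat). specialize (h2 (n + k)%nat). lra. }
  assert (ub : forall n m, a m <= a n + w n).
  { intros n m. destruct (le_lt_dec n m) as [l | l].
    - destruct (inv n (m - n)%nat) as [_ H]. replace (n + (m - n))%nat with m in H by lia.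
      specialize (h3 m). lra.
    - destruct (inv m (n - m)%nat) as [H _]. replace (m + (n - m))%nat with n in H by lia.
      specialize (h3 n). lra. }
  destruct (completeness (fun x => exists n, x = a n)) as [l [Hl1 Hl2]].
  - exists (a 0%nat + w 0%nat). intros x [n ->]. apply ub.
  - exists (a 0%nat). exists 0%nat. reflexivity.
  - exists l. intros n. split; [apply Hl1; exists n; reflexivity |].
    apply Hl2. intros x [m ->]. apply ub.
Qed.

Lemma bisection_point (B : R -> R -> R -> Prop) : B 0 0 1 ->
  (forall a b w, 0 < w -> B a b w -> exists a' b', B a' b' (w / 2) /\
      a <= a' <= a + w / 2 /\ b <= b' <= b + w / 2) ->
  exists a0 b0, 0 <= a0 <= 1 /\ 0 <= b0 <= 1 /\
    forall n, exists a b, B a b (/ 2 ^ n) /\ a <= a0 <= a + / 2 ^ n /\ b <= b0 <= b + / 2 ^ n.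
Proof.
  intros h0 hs.
  set (quarter := fun (p : R * R) w (q : R * R) => B (fst q) (snd q) (w / 2) /\
        fst p <= fst q <= fst p + w / 2 /\ snd p <= snd q <= snd p + w / 2).
  set (step := fun p w => epsilon (inhabits p) (quarter p w)).
  assert (Hstep : forall p w, 0 < w -> B (fst p) (snd p) w -> quarter p w (step p w)).
  { intros p w hw hb. apply epsilon_spec.
    destruct (hs _ _ _ hw hb) as [a' [b' H]]. exists (a', b'). exact H. }
  set (seq := fix seq (n : nat) : R * R :=
         match n with O => (0, 0) | S k => step (seq k) (/ 2 ^ k) end).
  assert (HB : forall n, B (fst (seq n)) (snd (seq n)) (/ 2 ^ n)).
  { induction n as [| n IH]; [simpl; rewrite Rinv_1; exact h0 |].
    rewrite inv_pow2_S. apply (Hstep (seq n) _ (inv_pow2_pos n) IH). }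
  assert (HN : forall n, quarter (seq n) (/ 2 ^ n) (seq (S n))).
  { intros n. apply (Hstep _ _ (inv_pow2_pos n) (HB n)). }
  destruct (nested_intervals (fun n => fst (seq n)) (fun n => / 2 ^ n)) as [a0 Ha].
  { intros n. apply HN. }
  { intros n. rewrite inv_pow2_S. destruct (HN n) as [_ [h _]]. lra. }
  { intros n. left. apply inv_pow2_pos. }
  destruct (nested_intervals (fun n => snd (seq n)) (fun n => / 2 ^ n)) as [b0 Hb].
  { intros n. apply HN. }
  { intros n. rewrite inv_pow2_S. destruct (HN n) as [_ [_ h]]. lra. }
  { intros n. left. apply inv_pow2_pos. }
  exists a0, b0.
  specialize (Ha 0%nat) as Ha0. specialize (Hb 0%nat) as Hb0. simpl in Ha0, Hb0.
  rewrite Rinv_1 in Ha0, Hb0.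
  split; [lra | split; [lra |]].
  intros n. exists (fst (seq n)), (snd (seq n)). split; [apply HB | split; [apply Ha | apply Hb]].
Qed.

Section LebesgueNumber.
Variables (D : R -> R -> Prop) (H : R -> R -> R * R).
Hypotheses (oD : open2 D) (cH : cont_square H)
  (HD : forall u s, 0 <= u <= 1 -> 0 <= s <= 1 -> D (fst (H u s)) (snd (H u s))).

(* The factor 3 leaves room for [corner_integral_cocycle]. *)
Definition covered_near (u0 s0 lam : R) : Prop :=
  exists c r, square_in D c (3 * r) /\ forall u s, 0 <= u <= 1 -> 0 <= s <= 1 ->
    Rabs (u - u0) <= lam -> Rabs (s - s0) <= lam -> in_square c r (H u s).

Definition lebesgue_number (lam : R) : Prop :=
  0 < lam /\ forall u0 s0, 0 <= u0 <= 1 -> 0 <= s0 <= 1 -> covered_near u0 s0 lam.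

Definition lebesgue_number_on (a b w : R) : Prop :=
  exists lam, 0 < lam /\ forall u0 s0, 0 <= u0 <= 1 -> 0 <= s0 <= 1 ->
    a <= u0 <= a + w -> b <= s0 <= b + w -> covered_near u0 s0 lam.

Lemma covered_near_weaken u0 s0 lam lam' : lam' <= lam ->
  covered_near u0 s0 lam -> covered_near u0 s0 lam'.
Proof.
  intros hl [c [r [hc Hc]]]. exists c, r. split; [exact hc |].
  intros u s hu hs h1 h2. apply Hc; auto; lra.
Qed.

Lemma covered_near_locally u1 s1 : 0 <= u1 <= 1 -> 0 <= s1 <= 1 ->
  exists d, 0 < d /\ covered_near u1 s1 d.
Proof.
  intros hu hs. destruct (oD _ _ (HD u1 s1 hu hs)) as [e [he HE]].
  destruct (cH u1 s1 hu hs (e / 3)) as [d [hd Hd]]; [lra |].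
  exists (d / 2). split; [lra |]. exists (H u1 s1), (e / 3). split.
  - split; [lra |]. intros z [h1 h2]. apply HE; lra.
  - intros u s hu' hs' h1 h2.
    assert (Hus := Hd u s hu' hs' ltac:(lra) ltac:(lra)).
    unfold dist2 in Hus. apply Rmax_Rlt in Hus. exact Hus.
Qed.

Lemma lebesgue_number_on_quarters a b w : 0 < w ->
  lebesgue_number_on a b (w / 2) -> lebesgue_number_on (a + w / 2) b (w / 2) ->
  lebesgue_number_on a (b + w / 2) (w / 2) -> lebesgue_number_on (a + w / 2) (b + w / 2) (w / 2) ->
  lebesgue_number_on a b w.
Proof.
  intros hw [l1 [p1 H1]] [l2 [p2 H2]] [l3 [p3 H3]] [l4 [p4 H4]].
  set (l := Rmin (Rmin l1 l2) (Rmin l3 l4)).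
  assert (hl : l <= l1 /\ l <= l2 /\ l <= l3 /\ l <= l4).
  { unfold l. assert (m1 := Rmin_l l1 l2). assert (m2 := Rmin_r l1 l2).
    assert (m3 := Rmin_l l3 l4). assert (m4 := Rmin_r l3 l4).
    assert (m5 := Rmin_l (Rmin l1 l2) (Rmin l3 l4)). assert (m6 := Rmin_r (Rmin l1 l2) (Rmin l3 l4)).
    lra. }
  exists l. split; [unfold l; repeat apply Rmin_pos; assumption |].
  intros u0 s0 hu hs hau hbs.
  destruct (Rle_dec u0 (a + w / 2)); destruct (Rle_dec s0 (b + w / 2)).
  - apply (covered_near_weaken _ _ l1); [lra | apply H1; auto; lra].
  - apply (covered_near_weaken _ _ l3); [lra | apply H3; auto; lra].
  - apply (covered_near_weaken _ _ l2); [lra | apply H2; auto; lra].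
  - apply (covered_near_weaken _ _ l4); [lra | apply H4; auto; lra].
Qed.

Lemma lebesgue_number_exists : exists lam, lebesgue_number lam.
Proof.
  apply NNPP. intros Hn.
  assert (B0 : ~ lebesgue_number_on 0 0 1).
  { intros [l [hl Hl]]. apply Hn. exists l. split; [exact hl |].
    intros u0 s0 hu hs. apply Hl; auto; lra. }
  destruct (bisection_point (fun a b w => ~ lebesgue_number_on a b w) B0)
    as [a0 [b0 [ha0 [hb0 Hbad]]]].
  { intros a b w hw hb. apply NNPP. intros Hq. apply hb.
    apply lebesgue_number_on_quarters; [exact hw | | | |]; apply NNPP; intros Hk; apply Hq.
    - exists a, b. split; [exact Hk | lra].
    - exists (a + w / 2), b. split; [exact Hk | lra].
    - exists a, (b + w / 2). split; [exact Hk | lra].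
    - exists (a + w / 2), (b + w / 2). split; [exact Hk | lra]. }
  destruct (covered_near_locally a0 b0 ha0 hb0) as [d [hd Hd]].
  destruct (inv_pow2_lt (d / 2)) as [n hn]; [lra |].
  destruct (Hbad n) as [a [b [hbad [h1 h2]]]]. apply hbad.
  exists (d / 2). split; [lra |]. intros u0 s0 _ _ hau hbs.
  destruct Hd as [c [r [hc Hc]]]. exists c, r. split; [exact hc |].
  intros u s hu hs h3 h4. apply Hc; auto.
  - apply Rabs_le_between in h3. apply Rabs_le. lra.
  - apply Rabs_le_between in h4. apply Rabs_le. lra.
Qed.

End LebesgueNumber.

(** * Paths and partitions *)

Fixpoint psum (f : nat -> R) (n : nat) : R :=
  match n with O => 0 | S k => psum f k + f k end.

Lemma psum_ext f g n : (forall k, (k < n)%nat -> f k = g k) -> psum f n = psum g n.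
Proof.
  induction n as [| n IH]; intros H; simpl; [reflexivity |].
  rewrite IH by (intros; apply H; lia). rewrite H by lia. reflexivity.
Qed.

Lemma psum_add_range f a b : psum f (a + b) = psum f a + psum (fun j => f (a + j)%nat) b.
Proof.
  induction b as [| b IH]; simpl; [rewrite Nat.add_0_r; ring |].
  rewrite Nat.add_succ_r. simpl. rewrite IH. ring.
Qed.

Lemma psum_mul_range f N M : psum f (N * M) = psum (fun k => psum (fun j => f (k * M + j)%nat) M) N.
Proof.
  induction N as [| N IH]; simpl; [reflexivity |].
  rewrite Nat.add_comm, psum_add_range, IH. reflexivity.
Qed.

Lemma psum_telescope h n : psum (fun j => h (S j) - h j) n = h n - h O.
Proof. induction n as [| n IH]; simpl; [ring | rewrite IH; ring]. Qed.

Lemma psum_plus f g n : psum (fun k => f k + g k) n = psum f n + psum g n.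
Proof. induction n as [| n IH]; simpl; [ring | rewrite IH; ring]. Qed.

Lemma psum_opp f n : psum (fun k => - f k) n = - psum f n.
Proof. induction n as [| n IH]; simpl; [ring | rewrite IH; ring]. Qed.

Lemma psum_zero n : psum (fun _ => 0) n = 0.
Proof. induction n as [| n IH]; simpl; [| rewrite IH]; ring. Qed.

Lemma dist2_lt p q e : dist2 p q < e <-> Rabs (fst p - fst q) < e /\ Rabs (snd p - snd q) < e.
Proof. apply Rmax_Rlt. Qed.

Lemma dist2_triangle p q w e1 e2 : dist2 p q < e1 -> dist2 q w < e2 -> dist2 p w < e1 + e2.
Proof. rewrite !dist2_lt. intros [h1 h2] [h3 h4]. split; eapply Rabs_sub_lt; eassumption. Qed.

Definition path_concat (g h : R -> R * R) (s : R) : R * R :=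
  if Rle_dec s (1 / 2) then g (2 * s) else h (2 * s - 1).

Definition path_reverse (g : R -> R * R) (s : R) : R * R := g (1 - s).

Definition segment_path (z z' : R * R) (s : R) : R * R :=
  (fst z + s * (fst z' - fst z), snd z + s * (snd z' - snd z)).

Lemma path_concat_0 g h : path_concat g h 0 = g 0.
Proof. unfold path_concat. destruct (Rle_dec 0 (1 / 2)); [f_equal; ring | lra]. Qed.

Lemma path_concat_1 g h : path_concat g h 1 = h 1.
Proof. unfold path_concat. destruct (Rle_dec 1 (1 / 2)); [lra | f_equal; ring]. Qed.

Lemma segment_path_0 z z' : segment_path z z' 0 = z.
Proof. destruct z. unfold segment_path. simpl. f_equal; ring. Qed.

Lemma segment_path_1 z z' : segment_path z z' 1 = z'.
Proof. destruct z, z'. unfold segment_path. simpl. f_equal; ring. Qed.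

Lemma cont_path_concat g h : cont_path g -> cont_path h -> g 1 = h 0 -> cont_path (path_concat g h).
Proof.
  intros cg ch e s hs eps heps.
  remember (Rmin (2 * s) 1) as sg eqn:Esg. remember (Rmax (2 * s - 1) 0) as sh eqn:Esh.
  assert (hsg : 0 <= sg <= 1) by (subst sg; unfold Rmin; destruct (Rle_dec (2 * s) 1); lra).
  assert (hsh : 0 <= sh <= 1) by (subst sh; unfold Rmax; destruct (Rle_dec (2 * s - 1) 0); lra).
  destruct (cg _ hsg (eps / 2)) as [d1 [hd1 H1]]; [lra |].
  destruct (ch _ hsh (eps / 2)) as [d2 [hd2 H2]]; [lra |].
  assert (Hmin := conj (Rmin_l d1 d2) (Rmin_r d1 d2)).
  exists (Rmin d1 d2 / 2). split; [assert (0 < Rmin d1 d2) by (apply Rmin_pos; assumption); lra |].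
  intros s' hs' hss. apply Rabs_def2 in hss.
  replace eps with (eps / 2 + eps / 2) by field.
  unfold path_concat. destruct (Rle_dec s' (1 / 2)); destruct (Rle_dec s (1 / 2)).
  - assert (E : sg = 2 * s) by (subst sg; unfold Rmin; destruct (Rle_dec (2 * s) 1); lra).
    rewrite E in H1. assert (dist2 (g (2 * s')) (g (2 * s)) < eps / 2) by (apply H1; [lra | apply Rabs_def1; lra]).
    lra.
  - assert (E : sg = 1) by (subst sg; unfold Rmin; destruct (Rle_dec (2 * s) 1); lra).
    assert (E' : sh = 2 * s - 1) by (subst sh; unfold Rmax; destruct (Rle_dec (2 * s - 1) 0); lra).
    rewrite E in H1. rewrite E' in H2. apply (dist2_triangle _ (g 1)).
    + apply H1; [lra | apply Rabs_def1; lra].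
    + rewrite e. apply H2; [lra | apply Rabs_def1; lra].
  - assert (E : sg = 2 * s) by (subst sg; unfold Rmin; destruct (Rle_dec (2 * s) 1); lra).
    assert (E' : sh = 0) by (subst sh; unfold Rmax; destruct (Rle_dec (2 * s - 1) 0); lra).
    rewrite E in H1. rewrite E' in H2. apply (dist2_triangle _ (h 0)).
    + apply H2; [lra | apply Rabs_def1; lra].
    + rewrite <- e. apply H1; [lra | apply Rabs_def1; lra].
  - assert (E' : sh = 2 * s - 1) by (subst sh; unfold Rmax; destruct (Rle_dec (2 * s - 1) 0); lra).
    rewrite E' in H2.
    assert (dist2 (h (2 * s' - 1)) (h (2 * s - 1)) < eps / 2) by (apply H2; [lra | apply Rabs_def1; lra]).
    lra.
Qed.

Lemma cont_path_reverse g : cont_path g -> cont_path (path_reverse g).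
Proof.
  intros cg s hs eps heps. destruct (cg (1 - s) ltac:(lra) eps heps) as [d [hd H]].
  exists d. split; [exact hd |]. intros s' hs' h. apply H; [lra |].
  replace (1 - s' - (1 - s)) with (- (s' - s)) by ring. rewrite Rabs_Ropp. exact h.
Qed.

Lemma cont_path_segment z z' : cont_path (segment_path z z').
Proof.
  intros s hs eps heps.
  set (K := 1 + Rabs (fst z' - fst z) + Rabs (snd z' - snd z)).
  assert (hA := Rabs_pos (fst z' - fst z)). assert (hB := Rabs_pos (snd z' - snd z)).
  assert (hK : 0 < K) by (unfold K; lra).
  exists (eps / K). split; [apply Rdiv_lt_0_compat; assumption |].
  intros s' hs' h. apply dist2_lt. unfold segment_path; simpl.
  assert (hs0 := Rabs_pos (s' - s)).
  assert (hh : Rabs (s' - s) * K < eps).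
  { apply (Rmult_lt_compat_r K) in h; [| exact hK]. unfold Rdiv in h.
    rewrite Rmult_assoc, Rinv_l, Rmult_1_r in h by lra. exact h. }
  unfold K in hh. split.
  - replace (fst z + s' * (fst z' - fst z) - (fst z + s * (fst z' - fst z)))
      with ((s' - s) * (fst z' - fst z)) by ring.
    rewrite Rabs_mult. nra.
  - replace (snd z + s' * (snd z' - snd z) - (snd z + s * (snd z' - snd z)))
      with ((s' - s) * (snd z' - snd z)) by ring.
    rewrite Rabs_mult. nra.
Qed.

Lemma segment_path_in_square z z' r s : in_square z r z' -> 0 <= s <= 1 ->
  in_square z r (segment_path z z' s).
Proof.
  intros [h1 h2] hs. unfold in_square, segment_path; simpl.
  replace (fst z + s * (fst z' - fst z) - fst z) with (s * (fst z' - fst z)) by ring.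
  replace (snd z + s * (snd z' - snd z) - snd z) with (s * (snd z' - snd z)) by ring.
  rewrite !Rabs_mult, (Rabs_right s) by lra.
  assert (0 <= Rabs (fst z' - fst z)) by apply Rabs_pos.
  assert (0 <= Rabs (snd z' - snd z)) by apply Rabs_pos. split; nra.
Qed.

Section Paths.
Variable D : R -> R -> Prop.

Lemma path_in_concat g h : path_in D g -> path_in D h -> g 1 = h 0 -> path_in D (path_concat g h).
Proof.
  intros [cg ig] [ch ih] e. split; [apply cont_path_concat; assumption |].
  intros s hs. unfold path_concat. destruct (Rle_dec s (1 / 2)); [apply ig | apply ih]; lra.
Qed.

Lemma path_in_reverse g : path_in D g -> path_in D (path_reverse g).
Proof. intros [cg ig]. split; [apply cont_path_reverse, cg | intros s hs; apply ig; lra]. Qed.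

Lemma path_in_segment z r z' : square_in D z r -> in_square z r z' -> path_in D (segment_path z z').
Proof.
  intros [_ hD] hz'. split; [apply cont_path_segment |].
  intros s hs. apply hD, segment_path_in_square; assumption.
Qed.

End Paths.

Lemma grid_in_unit N k : (0 < N)%nat -> (k <= N)%nat -> 0 <= INR k / INR N <= 1.
Proof.
  intros hN hk. assert (nN : 0 < INR N) by (apply lt_0_INR, hN).
  assert (INR k <= INR N) by (apply le_INR, hk).
  split; [apply Rdiv_le_0_compat; [apply pos_INR | exact nN] |].
  apply (Rmult_le_reg_r (INR N)); [exact nN |].
  unfold Rdiv. rewrite Rmult_assoc, Rinv_l by lra. lra.
Qed.

Lemma grid_step N k : (0 < N)%nat -> INR (S k) / INR N = INR k / INR N + / INR N.
Proof. intros hN. assert (0 < INR N) by (apply lt_0_INR, hN). rewrite S_INR. field. lra. Qed.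

Lemma grid_0 N : INR 0 / INR N = 0.
Proof. simpl. unfold Rdiv. ring. Qed.

Lemma grid_1 N : (0 < N)%nat -> INR N / INR N = 1.
Proof. intros hN. apply Rdiv_diag, not_0_INR. lia. Qed.

Lemma exists_grid_finer lam : 0 < lam -> exists N0, (0 < N0)%nat /\
  forall N, (N0 <= N)%nat -> (0 < N)%nat /\ / INR N <= lam.
Proof.
  intros hl. destruct (archimed_cor1 lam hl) as [N0 [h1 h2]]. exists N0. split; [exact h2 |].
  intros N hN. split; [lia |]. eapply Rle_trans; [| left; exact h1].
  apply Rinv_le_contravar; [apply lt_0_INR, h2 | apply le_INR, hN].
Qed.

Lemma path_concat_grid_left g h N k : (0 < N)%nat -> (k <= N)%nat ->
  path_concat g h (INR k / INR (2 * N)) = g (INR k / INR N).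
Proof.
  intros hN hk. assert (nN : 0 < INR N) by (apply lt_0_INR, hN).
  assert (INR k <= INR N) by (apply le_INR, hk).
  rewrite mult_INR. replace (INR 2) with 2 by (simpl; ring).
  unfold path_concat. destruct (Rle_dec (INR k / (2 * INR N)) (1 / 2)) as [q | q].
  - f_equal. field. lra.
  - exfalso. apply q. apply (Rmult_le_reg_r (2 * INR N)); [lra |].
    unfold Rdiv. rewrite Rmult_assoc, Rinv_l by lra. lra.
Qed.

Lemma path_concat_grid_right g h N j : (0 < N)%nat -> g 1 = h 0 ->
  path_concat g h (INR (N + j) / INR (2 * N)) = h (INR j / INR N).
Proof.
  intros hN e. assert (nN : 0 < INR N) by (apply lt_0_INR, hN). assert (0 <= INR j) by apply pos_INR.
  rewrite mult_INR, plus_INR. replace (INR 2) with 2 by (simpl; ring).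
  unfold path_concat. destruct (Rle_dec ((INR N + INR j) / (2 * INR N)) (1 / 2)) as [q | q].
  - assert (Ej : INR j = 0).
    { apply (Rmult_le_compat_r (2 * INR N)) in q; [| lra]. unfold Rdiv in q.
      rewrite Rmult_assoc, Rinv_l in q by lra. lra. }
    rewrite Ej. replace (2 * ((INR N + 0) / (2 * INR N))) with 1 by (field; lra).
    replace (0 / INR N) with 0 by (field; lra). exact e.
  - f_equal. field. lra.
Qed.
(** * Corner integrals and exactness of closed forms *)

Section ClosedForm.
Variables (D : R -> R -> Prop) (P Q Py Qx : R -> R -> R).
Hypotheses (cP : cont_on D P) (cQ : cont_on D Q) (cPy : cont_on D Py) (cQx : cont_on D Qx)
  (dPy : is_d01_on D P Py) (dQx : is_d10_on D Q Qx)
  (closed : forall x y, D x y -> Py x y = Qx x y).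

Definition corner_integral (c z : R * R) : R :=
  RInt (fun s => P s (snd c)) (fst c) (fst z) + RInt (fun s => Q (fst z) s) (snd c) (snd z).

Lemma corner_integral_self z : corner_integral z z = 0.
Proof. unfold corner_integral. rewrite !RInt_point. unfold zero; simpl; ring. Qed.

Lemma ex_RInt_corner_vertical c r x y : square_in D c r -> in_square c r (x, y) ->
  ex_RInt (fun s => Q x s) (snd c) y.
Proof.
  intros [_ hD] hz. apply (ex_RInt_continuous (V := R_CompleteNormedModule)). intros s hs.
  apply (cont_on_continuous_2 D); [exact cQ |].
  apply (hD (x, s)), (in_square_vertical c r x y s hz hs).
Qed.

Lemma ex_RInt_corner_horizontal c r x : square_in D c r -> Rabs (x - fst c) < r ->
  ex_RInt (fun s => P s (snd c)) (fst c) x.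
Proof.
  intros [hr hD] hx. apply (ex_RInt_continuous (V := R_CompleteNormedModule)). intros s hs.
  apply (cont_on_continuous_1 D); [exact cP |].
  apply (hD (s, snd c)), (in_square_horizontal c r x s hr hx hs).
Qed.

(* Differentiation under the integral sign, then [Qx = Py] and the fundamental theorem of calculus. *)
Lemma RInt_vertical_d10 c r x y : square_in D c r -> in_square c r (x, y) ->
  is_derive (fun a => RInt (fun s => Q a s) (snd c) y) x (P x y - P x (snd c)).
Proof.
  intros hc hz. destruct hc as [hr hD].
  assert (vert : forall a s, in_square c r (a, y) -> Rmin (snd c) y <= s <= Rmax (snd c) y -> D a s).
  { intros a s ha hs. apply (hD (a, s)), (in_square_vertical c r a y s ha hs). }
  destruct (in_square_open c r _ hz) as [e [he He]].
  assert (near : forall a, Rabs (a - x) < e -> in_square c r (a, y)).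
  { intros a ha. apply He. split; simpl; [exact ha | rewrite Rminus_diag, Rabs_R0; exact he]. }
  assert (FTC : RInt (fun s => Derive (fun u => Q u s) x) (snd c) y = P x y - P x (snd c)).
  { rewrite (RInt_ext _ (fun s => Py x s)).
    - apply is_RInt_unique, (is_RInt_derive (fun s => P x s) (fun s => Py x s)).
      + intros s hs. apply is_derive_Reals, dPy, (vert x s hz hs).
      + intros s hs. apply (cont_on_continuous_2 D); [exact cPy | exact (vert x s hz hs)].
    - intros s [hs1 hs2]. assert (Ds : D x s) by (apply (vert x s hz); lra).
      rewrite closed by exact Ds. apply is_derive_unique, is_derive_Reals, dQx, Ds. }
  rewrite <- FTC. apply is_derive_RInt_param.
  - apply (locally_Rabs_lt x e _ he). intros a ha s hs.
    exists (Qx a s). apply is_derive_Reals, dQx, (vert a s (near a ha) hs).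
  - intros s hs. assert (hxs := in_square_vertical c r x y s hz hs).
    destruct (in_square_open c r _ hxs) as [e' [he' He']].
    apply (continuity_2d_pt_loc_ext _ Qx x s e' he').
    + intros u v hu hv. apply is_derive_unique, is_derive_Reals, dQx, (hD (u, v)), He'.
      split; assumption.
    + apply (cont_on_continuity_2d D); [exact cQx | exact (hD (x, s) hxs)].
  - apply (locally_Rabs_lt x e _ he). intros a ha.
    apply (ex_RInt_corner_vertical c r a y); [split |]; auto.
Qed.

Lemma corner_integral_d10 c r x y : square_in D c r -> in_square c r (x, y) ->
  has_d10_at (fun a b => corner_integral c (a, b)) x y (P x y).
Proof.
  intros hc hz. unfold has_d10_at, corner_integral; simpl. apply is_derive_Reals.
  replace (P x y) with (P x (snd c) + (P x y - P x (snd c))) by ring.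
  apply @is_derive_plus; [| apply (RInt_vertical_d10 c r); assumption].
  destruct hc as [hr hD]. destruct (in_square_open c r _ hz) as [e [he He]].
  apply (is_derive_RInt (fun s => P s (snd c)) _ (fst c) x).
  - apply (locally_Rabs_lt x e _ he). intros a ha.
    apply (RInt_correct (V := R_CompleteNormedModule)).
    apply (ex_RInt_corner_horizontal c r a); [split; assumption |].
    apply (He (a, y)). split; simpl; [exact ha | rewrite Rminus_diag, Rabs_R0; exact he].
  - apply (cont_on_continuous_1 D); [exact cP |].
    apply (hD (x, snd c)), (in_square_horizontal c r x x hr (proj1 hz)).
    split; [apply Rmin_r | apply Rmax_r].
Qed.

Lemma corner_integral_d01 c r x y : square_in D c r -> in_square c r (x, y) ->
  has_d01_at (fun a b => corner_integral c (a, b)) x y (Q x y).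
Proof.
  intros hc hz. unfold has_d01_at, corner_integral; simpl. apply is_derive_Reals.
  replace (Q x y) with (0 + Q x y) by ring.
  apply @is_derive_plus; [apply (is_derive_const (K := R_AbsRing) (V := R_NormedModule)) |].
  destruct (in_square_open c r _ hz) as [e [he He]].
  apply (is_derive_RInt (fun s => Q x s) _ (snd c) y).
  - apply (locally_Rabs_lt y e _ he). intros b hb.
    apply (RInt_correct (V := R_CompleteNormedModule)), (ex_RInt_corner_vertical c r x b hc).
    apply (He (x, b)). split; simpl; [rewrite Rminus_diag, Rabs_R0; exact he | exact hb].
  - apply (cont_on_continuous_2 D); [exact cQ | apply (proj2 hc (x, y) hz)].
Qed.

Lemma corner_integral_partials c r x y : square_in D c r -> in_square c r (x, y) ->
  has_d10_at (fun a b => corner_integral c (a, b)) x y (P x y) /\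
  has_d01_at (fun a b => corner_integral c (a, b)) x y (Q x y).
Proof.
  intros hc hz. split; [apply (corner_integral_d10 c r) | apply (corner_integral_d01 c r)]; assumption.
Qed.

(* Both corner integrals are primitives of [(P, Q)] on the square of centre [z] and radius [2 r]. *)
Lemma corner_integral_cocycle c r z z' : square_in D c (3 * r) ->
  in_square c r z -> in_square c r z' ->
  corner_integral z z' = corner_integral c z' - corner_integral c z.
Proof.
  intros [hr hD] hz hz'.
  assert (sub : forall w, in_square z (2 * r) w -> in_square c (3 * r) w).
  { intros w hw. replace (3 * r) with (2 * r + r) by ring. apply (in_square_trans c z); assumption. }
  assert (hz2 : square_in D z (2 * r)) by (split; [lra | intros w hw; apply hD, sub, hw]).
  assert (E := same_partials_diff_eq P Q (fun a b => corner_integral z (a, b))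
                 (fun a b => corner_integral c (a, b)) z (2 * r)).
  specialize (E (fun x y hxy => corner_integral_partials z (2 * r) x y hz2 hxy)).
  specialize (E (fun x y hxy => corner_integral_partials c (3 * r) x y (conj hr hD) (sub _ hxy))).
  specialize (E z z' (in_square_center z (2 * r) ltac:(lra))).
  assert (hzz' : in_square z (2 * r) z').
  { replace (2 * r) with (r + r) by ring. apply (in_square_trans z c); [apply in_square_sym |]; assumption. }
  specialize (E hzz'). destruct z as [x y], z' as [x' y']; simpl in E.
  rewrite corner_integral_self in E. lra.
Qed.

Definition path_sum (g : R -> R * R) (N : nat) : R :=
  psum (fun k => corner_integral (g (INR k / INR N)) (g (INR (S k) / INR N))) N.

Definition fine_partition (g : R -> R * R) (N : nat) : Prop :=
  (0 < N)%nat /\ forall k, (k < N)%nat -> exists c r, square_in D c (3 * r) /\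
    forall s, INR k / INR N <= s <= INR (S k) / INR N -> in_square c r (g s).

Lemma psum_corner_integral_square c r (a : nat -> R * R) n : square_in D c (3 * r) ->
  (forall k, (k <= n)%nat -> in_square c r (a k)) ->
  psum (fun k => corner_integral (a k) (a (S k))) n = corner_integral c (a n) - corner_integral c (a O).
Proof.
  intros hc ha. rewrite <- (psum_telescope (fun k => corner_integral c (a k))).
  apply psum_ext. intros k hk.
  apply (corner_integral_cocycle c r); [exact hc | apply ha; lia | apply ha; lia].
Qed.

Lemma path_sum_refine g N M : fine_partition g N -> (0 < M)%nat -> path_sum g (N * M) = path_sum g N.
Proof.
  intros [hN hf] hM. unfold path_sum. rewrite psum_mul_range. apply psum_ext. intros k hk.
  destruct (hf k hk) as [c [r [hc hs]]].
  assert (nN : 0 < INR N) by (apply lt_0_INR, hN).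
  assert (nM : 0 < INR M) by (apply lt_0_INR, hM).
  assert (inc : forall j, (j <= M)%nat -> in_square c r (g (INR (k * M + j) / INR (N * M)))).
  { intros j hj. apply hs. assert (INR j <= INR M) by (apply le_INR, hj). assert (0 <= INR j) by apply pos_INR.
    rewrite plus_INR, !mult_INR, S_INR.
    replace ((INR k * INR M + INR j) / (INR N * INR M)) with (INR k / INR N + INR j / (INR N * INR M)) by (field; lra).
    replace ((INR k + 1) / INR N) with (INR k / INR N + INR M / (INR N * INR M)) by (field; lra).
    assert (0 < / (INR N * INR M)) by (apply Rinv_0_lt_compat; nra).
    unfold Rdiv. split; nra. }
  transitivity (psum (fun j => corner_integral (g (INR (k * M + j) / INR (N * M)))
                                               (g (INR (k * M + S j) / INR (N * M)))) M).
  { apply psum_ext. intros j _. rewrite Nat.add_succ_r. reflexivity. }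
  rewrite (psum_corner_integral_square c r (fun j => g (INR (k * M + j) / INR (N * M))) M hc inc).
  rewrite <- (corner_integral_cocycle c r); [| exact hc | apply inc; lia | apply inc; lia].
  rewrite Nat.add_0_r.
  replace (INR (k * M) / INR (N * M)) with (INR k / INR N) by (rewrite !mult_INR; field; lra).
  replace (INR (k * M + M) / INR (N * M)) with (INR (S k) / INR N)
    by (rewrite plus_INR, !mult_INR, S_INR; field; lra).
  reflexivity.
Qed.

Lemma path_sum_fine_indep g N1 N2 : fine_partition g N1 -> fine_partition g N2 ->
  path_sum g N1 = path_sum g N2.
Proof.
  intros h1 h2. rewrite <- (path_sum_refine g N1 N2 h1) by apply h2.
  rewrite <- (path_sum_refine g N2 N1 h2) by apply h1. rewrite Nat.mul_comm. reflexivity.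
Qed.

Lemma fine_partition_of_lebesgue g lam N : lebesgue_number D (fun _ s => g s) lam ->
  (0 < N)%nat -> / INR N <= lam -> fine_partition g N.
Proof.
  intros [hl H] hN hNl. split; [exact hN |]. intros k hk.
  assert (hk0 := grid_in_unit N k hN ltac:(lia)). assert (hk1 := grid_in_unit N (S k) hN hk).
  rewrite grid_step in hk1 by exact hN.
  destruct (H 0 (INR k / INR N) ltac:(lra) hk0) as [c [r [hc hs]]].
  exists c, r. split; [exact hc |]. intros s hs'. rewrite grid_step in hs' by exact hN.
  apply (hs 0 s); [lra | lra | rewrite Rminus_diag, Rabs_R0; lra | apply Rabs_le; lra].
Qed.

Lemma path_lebesgue_number g : open2 D -> path_in D g -> exists lam, lebesgue_number D (fun _ s => g s) lam.
Proof.
  intros oD [cg ig]. apply (lebesgue_number_exists D (fun _ s => g s) oD).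
  - intros u s hu hs eps he. destruct (cg s hs eps he) as [d [hd Hd]].
    exists d. split; [exact hd |]. intros u' s' _ hs' _ h. apply Hd; assumption.
  - intros u s _ hs. apply ig, hs.
Qed.

Lemma eventually_fine_partition g : open2 D -> path_in D g ->
  exists N0, forall N, (N0 <= N)%nat -> fine_partition g N.
Proof.
  intros oD pg. destruct (path_lebesgue_number g oD pg) as [lam hlam].
  destruct (exists_grid_finer lam (proj1 hlam)) as [N0 [_ HN]]. exists N0.
  intros N hN. destruct (HN N hN). apply (fine_partition_of_lebesgue g lam); assumption.
Qed.

Section Homotopy.
Variables (H : R -> R -> R * R) (z0 : R * R) (K : nat) (lam : R).
Hypotheses (HL : lebesgue_number D H lam) (hK : (0 < K)%nat) (hKl : / INR K <= lam)
  (Hends : forall u, 0 <= u <= 1 -> H u 0 = z0 /\ H u 1 = z0).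

Let grid k := INR k / INR K.
Let row i := fun s => H (grid i) s.

Lemma grid_cell_square i j : (i < K)%nat -> (j < K)%nat -> exists c r, square_in D c (3 * r) /\
  forall a b, (a = i \/ a = S i) -> (b = j \/ b = S j) -> in_square c r (H (grid a) (grid b)).
Proof.
  intros hi hj. assert (hInv : 0 < / INR K) by (apply Rinv_0_lt_compat, lt_0_INR, hK).
  destruct HL as [_ HL'].
  destruct (HL' (grid i) (grid j)) as [c [r [hc Hc]]]; [apply grid_in_unit; lia .. |].
  exists c, r. split; [exact hc |]. intros a b ha hb.
  assert (near : forall p q, (p = q \/ p = S q) -> (p <= K)%nat -> Rabs (grid p - grid q) <= lam).
  { intros p q [-> | ->] hp; unfold grid; [rewrite Rminus_diag, Rabs_R0; lra |].
    rewrite grid_step by exact hK.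
    replace (INR q / INR K + / INR K - INR q / INR K) with (/ INR K) by ring.
    rewrite Rabs_right; lra. }
  apply Hc; [apply grid_in_unit; lia | apply grid_in_unit; lia | apply near | apply near]; auto; lia.
Qed.

(* Each grid cell contributes [e j - e (S j)] with [e j] the rung between the two rows, and the
   end rungs vanish since both rows start and end at [z0]. *)
Lemma path_sum_row_step i : (i < K)%nat -> path_sum (row i) K = path_sum (row (S i)) K.
Proof.
  intros hi.
  set (e := fun j => corner_integral (row i (INR j / INR K)) (row (S i) (INR j / INR K))).
  assert (cell : forall j, (j < K)%nat ->
     corner_integral (row i (INR j / INR K)) (row i (INR (S j) / INR K)) =
     (e j - e (S j)) + corner_integral (row (S i) (INR j / INR K)) (row (S i) (INR (S j) / INR K))).
  { intros j hj. destruct (grid_cell_square i j hi hj) as [c [r [hc Hc]]].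
    assert (q1 := Hc i j (or_introl eq_refl) (or_introl eq_refl)).
    assert (q2 := Hc i (S j) (or_introl eq_refl) (or_intror eq_refl)).
    assert (q3 := Hc (S i) j (or_intror eq_refl) (or_introl eq_refl)).
    assert (q4 := Hc (S i) (S j) (or_intror eq_refl) (or_intror eq_refl)).
    unfold e, row, grid in *.
    rewrite (corner_integral_cocycle c r _ _ hc q1 q2), (corner_integral_cocycle c r _ _ hc q1 q3),
      (corner_integral_cocycle c r _ _ hc q2 q4), (corner_integral_cocycle c r _ _ hc q3 q4).
    ring. }
  unfold path_sum. rewrite (psum_ext _ _ K cell), psum_plus.
  replace (psum (fun j => e j - e (S j)) K) with (- (e K - e O))
    by (rewrite <- psum_telescope, <- psum_opp; apply psum_ext; intros; ring).
  unfold e, row, grid. rewrite grid_0, grid_1 by exact hK.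
  destruct (Hends (INR i / INR K)) as [b0 b1]; [apply grid_in_unit; lia |].
  destruct (Hends (INR (S i) / INR K)) as [b0' b1']; [apply grid_in_unit; lia |].
  rewrite b0, b1, b0', b1', corner_integral_self. ring.
Qed.

Lemma path_sum_first_last_row : path_sum (row O) K = path_sum (row K) K.
Proof.
  assert (all : forall i, (i <= K)%nat -> path_sum (row O) K = path_sum (row i) K).
  { induction i as [| i IH]; intros hi; [reflexivity |].
    rewrite IH by lia. apply path_sum_row_step. lia. }
  apply all, le_n.
Qed.

End Homotopy.

Lemma path_sum_loop g N : simply_connected_domain D -> path_in D g -> g 0 = g 1 ->
  fine_partition g N -> path_sum g N = 0.
Proof.
  intros [[oD _] hsc] hg hloop hfN.
  destruct (hsc g hg hloop) as [H [cH [iH [H0 [H1 Hends]]]]].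
  destruct (lebesgue_number_exists D H oD cH iH) as [lam HL].
  destruct (exists_grid_finer lam (proj1 HL)) as [K [hK HK]]. destruct (HK K (le_n K)) as [_ hKl].
  assert (fgK : fine_partition g K).
  { apply (fine_partition_of_lebesgue g lam K); [| exact hK | exact hKl].
    split; [apply HL |]. intros u0 s0 _ hs0. destruct HL as [hl HL'].
    destruct (HL' 0 s0 ltac:(lra) hs0) as [c [r [hc Hc]]]. exists c, r. split; [exact hc |].
    intros u s hu hs _ h. rewrite <- (H0 s hs). apply Hc; [lra | exact hs | rewrite Rminus_diag, Rabs_R0; lra | exact h]. }
  rewrite (path_sum_fine_indep g N K hfN fgK).
  assert (rows := path_sum_first_last_row H (g 0) K lam HL hK hKl Hends).
  transitivity (path_sum (fun s => H (INR 0 / INR K) s) K).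
  { unfold path_sum. apply psum_ext. intros k hk. rewrite grid_0, !H0 by (apply grid_in_unit; lia).
    reflexivity. }
  rewrite rows. unfold path_sum. rewrite <- (psum_zero K). apply psum_ext. intros k hk.
  rewrite grid_1 by exact hK. rewrite !H1 by (apply grid_in_unit; lia). apply corner_integral_self.
Qed.

Lemma path_sum_concat g h N : g 1 = h 0 -> (0 < N)%nat ->
  path_sum (path_concat g h) (2 * N) = path_sum g N + path_sum h N.
Proof.
  intros e hN. unfold path_sum. replace (2 * N)%nat with (N + N)%nat by lia.
  rewrite psum_add_range. replace (N + N)%nat with (2 * N)%nat by lia. f_equal; apply psum_ext.
  - intros k hk. rewrite !path_concat_grid_left by lia. reflexivity.
  - intros j hj. replace (S (N + j)) with (N + S j)%nat by lia.
    rewrite !path_concat_grid_right by assumption. reflexivity.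
Qed.

(* The two loops [g1 . g2^-1] and [g2^-1 . g2] have zero sum. *)
Lemma path_sum_endpoints g1 g2 N1 N2 : simply_connected_domain D ->
  path_in D g1 -> path_in D g2 -> g1 0 = g2 0 -> g1 1 = g2 1 ->
  fine_partition g1 N1 -> fine_partition g2 N2 -> path_sum g1 N1 = path_sum g2 N2.
Proof.
  intros hD p1 p2 e0 e1 f1 f2. assert (oD : open2 D) by apply hD.
  assert (r0 : path_reverse g2 0 = g2 1) by (unfold path_reverse; f_equal; ring).
  assert (r1 : path_reverse g2 1 = g2 0) by (unfold path_reverse; f_equal; ring).
  assert (pr := path_in_reverse D g2 p2).
  assert (l1 : path_in D (path_concat g1 (path_reverse g2))) by (apply path_in_concat; auto; congruence).
  assert (l2 : path_in D (path_concat (path_reverse g2) g2)) by (apply path_in_concat; auto; congruence).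
  destruct (eventually_fine_partition g1 oD p1) as [M1 F1].
  destruct (eventually_fine_partition g2 oD p2) as [M2 F2].
  destruct (eventually_fine_partition _ oD l1) as [M3 F3].
  destruct (eventually_fine_partition _ oD l2) as [M4 F4].
  set (M := S (M1 + M2 + M3 + M4)).
  assert (Z1 := path_sum_loop _ (2 * M) hD l1 ltac:(rewrite path_concat_0, path_concat_1; congruence)
                  (F3 (2 * M)%nat ltac:(unfold M; lia))).
  assert (Z2 := path_sum_loop _ (2 * M) hD l2 ltac:(rewrite path_concat_0, path_concat_1; congruence)
                  (F4 (2 * M)%nat ltac:(unfold M; lia))).
  rewrite path_sum_concat in Z1, Z2 by (unfold M; auto; lia || congruence).
  rewrite (path_sum_fine_indep g1 N1 M f1 (F1 M ltac:(unfold M; lia))).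
  rewrite (path_sum_fine_indep g2 N2 M f2 (F2 M ltac:(unfold M; lia))).
  lra.
Qed.

Definition path_value (z0 z : R * R) (v : R) : Prop :=
  exists g N, path_in D g /\ g 0 = z0 /\ g 1 = z /\ fine_partition g N /\ v = path_sum g N.

Definition potential (z0 z : R * R) : R := epsilon (inhabits 0) (path_value z0 z).

Lemma potential_path_sum z0 z g N : simply_connected_domain D ->
  path_in D g -> g 0 = z0 -> g 1 = z -> fine_partition g N -> potential z0 z = path_sum g N.
Proof.
  intros hD pg e0 e1 fg. unfold potential.
  destruct (epsilon_spec (inhabits 0) (path_value z0 z)) as [g' [N' [pg' [e0' [e1' [fg' ->]]]]]].
  { exists (path_sum g N), g, N. auto. }
  apply (path_sum_endpoints g' g); auto; congruence.
Qed.

Lemma potential_local z0 z r z' : simply_connected_domain D -> D (fst z0) (snd z0) ->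
  square_in D z (3 * r) -> in_square z r z' ->
  potential z0 z' = potential z0 z + corner_integral z z'.
Proof.
  intros hD Dz0 hz hz'. assert (oD : open2 D) by apply hD.
  assert (hr : 0 < r) by (destruct hz; lra).
  assert (Dz : D (fst z) (snd z)) by (apply hz, in_square_center; lra).
  pose proof hD as [[_ [_ connected]] _].
  destruct (connected _ _ _ _ Dz0 Dz) as [g [pg [g0 g1]]].
  assert (g1' : g 1 = z) by (rewrite g1; destruct z; reflexivity).
  assert (g0' : g 0 = z0) by (rewrite g0; destruct z0; reflexivity).
  assert (hz3 : square_in D z r) by (destruct hz as [h3 hD3]; split; [lra |];
    intros w hw; apply hD3, (in_square_weaken z w r); [lra | exact hw]).
  assert (ps : path_in D (segment_path z z')) by exact (path_in_segment D z r z' hz3 hz').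
  assert (pcat : path_in D (path_concat g (segment_path z z')))
    by (apply path_in_concat; auto; rewrite segment_path_0; exact g1').
  destruct (eventually_fine_partition g oD pg) as [M1 F1].
  destruct (eventually_fine_partition _ oD pcat) as [M2 F2].
  set (M := S (M1 + M2)). assert (hM : (0 < M)%nat) by (unfold M; lia).
  assert (E : potential z0 z = path_sum g M)
    by (apply potential_path_sum; [exact hD | exact pg | exact g0' | exact g1' | apply F1; unfold M; lia]).
  assert (E' : potential z0 z' = path_sum (path_concat g (segment_path z z')) (2 * M)).
  { apply potential_path_sum; [exact hD | exact pcat | rewrite path_concat_0; exact g0' |
      rewrite path_concat_1; apply segment_path_1 | apply F2; unfold M; lia]. }
  rewrite E, E'.
  rewrite path_sum_concat by (rewrite ?segment_path_0; assumption).
  unfold path_sum at 2.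
  rewrite (psum_corner_integral_square z r (fun k => segment_path z z' (INR k / INR M)) M hz).
  - rewrite grid_0, grid_1, segment_path_0, segment_path_1, corner_integral_self by exact hM. ring.
  - intros k hk. apply segment_path_in_square; [exact hz' | apply grid_in_unit; assumption].
Qed.

Theorem closed_form_exact : simply_connected_domain D ->
  exists F : R -> R -> R, is_d10_on D F P /\ is_d01_on D F Q.
Proof.
  intros hD. pose proof hD as [[oD [[x0 [y0 D0]] _]] _].
  exists (fun x y => potential (x0, y0) (x, y)).
  assert (near : forall x y, D x y -> exists r, square_in D (x, y) (3 * r) /\
     locally_2d (fun a b => potential (x0, y0) (a, b) =
                            potential (x0, y0) (x, y) + corner_integral (x, y) (a, b)) x y).
  { intros x y Dxy. destruct (square_in_open D x y oD Dxy) as [e [he hsq]].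
    exists (e / 3). replace (3 * (e / 3)) with e by field. split; [split; assumption |].
    assert (he3 : 0 < e / 3) by lra. exists (mkposreal _ he3). intros a b ha hb.
    apply (potential_local (x0, y0) _ (e / 3) (a, b) hD D0); [| split; assumption].
    replace (3 * (e / 3)) with e by field. split; assumption. }
  split; intros x y Dxy; destruct (near x y Dxy) as [r [hsq [d Hd]]];
    assert (hc : in_square (x, y) (3 * r) (x, y)) by (apply in_square_center; apply hsq).
  - unfold has_d10_at. apply is_derive_Reals.
    apply (is_derive_ext_loc (fun a => potential (x0, y0) (x, y) + corner_integral (x, y) (a, y))).
    + exists d. intros a ha. symmetry. apply Hd; [exact ha | rewrite Rminus_diag, Rabs_R0; apply cond_pos].
    + replace (P x y) with (0 + P x y) by ring.
      apply @is_derive_plus; [apply (is_derive_const (K := R_AbsRing) (V := R_NormedModule)) |].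
      apply is_derive_Reals, (corner_integral_d10 (x, y) (3 * r)); assumption.
  - unfold has_d01_at. apply is_derive_Reals.
    apply (is_derive_ext_loc (fun b => potential (x0, y0) (x, y) + corner_integral (x, y) (x, b))).
    + exists d. intros b hb. symmetry. apply Hd; [rewrite Rminus_diag, Rabs_R0; apply cond_pos | exact hb].
    + replace (Q x y) with (0 + Q x y) by ring.
      apply @is_derive_plus; [apply (is_derive_const (K := R_AbsRing) (V := R_NormedModule)) |].
      apply is_derive_Reals, (corner_integral_d01 (x, y) (3 * r)); assumption.
Qed.

End ClosedForm.

(** * Symmetry of second partials *)

Section Smoothness.
Variable D : R -> R -> Prop.
Hypothesis oD : open2 D.

Lemma Derive_d10 f g a b : is_d10_on D f g -> D a b -> Derive (fun x => f x b) a = g a b.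
Proof. intros hf Dab. apply is_derive_unique, is_derive_Reals, hf, Dab. Qed.

Lemma Derive_d01 f g a b : is_d01_on D f g -> D a b -> Derive (fun y => f a y) b = g a b.
Proof. intros hf Dab. apply is_derive_unique, is_derive_Reals, hf, Dab. Qed.

Lemma is_d10_on_ext f g m : (forall a b, D a b -> f a b = g a b) -> is_d10_on D g m -> is_d10_on D f m.
Proof.
  intros E hg a b Dab. destruct (oD a b Dab) as [e [he HE]].
  apply (derivable_pt_lim_loc_ext (fun x => g x b) _ a _ e he); [| apply hg, Dab].
  intros t ht. symmetry. apply E, HE; [exact ht | rewrite Rminus_diag, Rabs_R0; exact he].
Qed.

Lemma is_d01_on_ext f g m : (forall a b, D a b -> f a b = g a b) -> is_d01_on D g m -> is_d01_on D f m.
Proof.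
  intros E hg a b Dab. destruct (oD a b Dab) as [e [he HE]].
  apply (derivable_pt_lim_loc_ext (fun y => g a y) _ b _ e he); [| apply hg, Dab].
  intros t ht. symmetry. apply E, HE; [rewrite Rminus_diag, Rabs_R0; exact he | exact ht].
Qed.

Lemma d10_unique f g g' : is_d10_on D f g -> is_d10_on D f g' -> forall a b, D a b -> g a b = g' a b.
Proof. intros h h' a b Dab. apply (uniqueness_limite (fun x => f x b) a); [apply h | apply h']; exact Dab. Qed.

Lemma d01_unique f g g' : is_d01_on D f g -> is_d01_on D f g' -> forall a b, D a b -> g a b = g' a b.
Proof. intros h h' a b Dab. apply (uniqueness_limite (fun y => f a y) b); [apply h | apply h']; exact Dab. Qed.

Lemma mixed_partials_eq f g1 g2 g12 g21 :
  is_d10_on D f g1 -> is_d01_on D f g2 -> is_d01_on D g1 g12 -> is_d10_on D g2 g21 ->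
  cont_on D g12 -> cont_on D g21 -> forall a b, D a b -> g21 a b = g12 a b.
Proof.
  intros d1 d2 d12 d21 c12 c21 a b Dab. destruct (oD a b Dab) as [e [he HE]].
  assert (he2 : 0 < e / 2) by lra.
  assert (inD : forall u v, Rabs (u - a) < e -> Rabs (v - b) < e -> D u v) by exact HE.
  assert (dx : forall u v, Rabs (u - a) < e / 2 -> Rabs (v - b) < e / 2 ->
     derivable_pt_lim (fun z => Derive (fun t => f z t) v) u (g21 u v) /\
     Derive (fun z => Derive (fun t => f z t) v) u = g21 u v).
  { intros u v hu hv. apply (derivable_pt_lim_loc_ext (fun z => g2 z v) _ u _ (e / 2) he2).
    - intros z hz. symmetry. apply (Derive_d01 _ _ _ _ d2), inD; [apply (Rabs_sub_lt z u a (e / 2) (e / 2)) in hz |]; lra.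
    - apply d21, inD; lra. }
  assert (dy : forall u v, Rabs (u - a) < e / 2 -> Rabs (v - b) < e / 2 ->
     derivable_pt_lim (fun z => Derive (fun t => f t z) u) v (g12 u v) /\
     Derive (fun z => Derive (fun t => f t z) u) v = g12 u v).
  { intros u v hu hv. apply (derivable_pt_lim_loc_ext (fun z => g1 u z) _ v _ (e / 2) he2).
    - intros z hz. symmetry. apply (Derive_d10 _ _ _ _ d1), inD; [| apply (Rabs_sub_lt z v b (e / 2) (e / 2)) in hz]; lra.
    - apply d12, inD; lra. }
  assert (h0 : Rabs (a - a) < e / 2 /\ Rabs (b - b) < e / 2) by (rewrite !Rminus_diag, Rabs_R0; lra).
  rewrite <- (proj2 (dx a b (proj1 h0) (proj2 h0))), <- (proj2 (dy a b (proj1 h0) (proj2 h0))).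
  apply Schwarz.
  - exists (mkposreal _ he2). simpl. intros u v hu hv. repeat split.
    + exists (g1 u v). apply is_derive_Reals, d1, inD; lra.
    + exists (g2 u v). apply is_derive_Reals, d2, inD; lra.
    + exists (g21 u v). apply is_derive_Reals, (dx u v hu hv).
    + exists (g12 u v). apply is_derive_Reals, (dy u v hu hv).
  - apply (continuity_2d_pt_loc_ext _ g21 a b (e / 2) he2); [apply dx | apply (cont_on_continuity_2d D _ _ _ c21 Dab)].
  - apply (continuity_2d_pt_loc_ext _ g12 a b (e / 2) he2); [apply dy | apply (cont_on_continuity_2d D _ _ _ c12 Dab)].
Qed.

Lemma C2_partials f f10 f01 : Ck 2 D f -> is_d10_on D f f10 -> is_d01_on D f f01 ->
  cont_on D f /\ cont_on D f10 /\ cont_on D f01 /\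
  exists m, cont_on D m /\ is_d01_on D f10 m /\ is_d10_on D f01 m.
Proof.
  intros [cf [g1 [g2 [d1 [d2 [[cg1 [_ [g12 [_ [d12 [_ c12]]]]]] [cg2 [g21 [_ [d21 [_ [c21 _]]]]]]]]]]]] h10 h01.
  assert (E1 := d10_unique f f10 g1 h10 d1). assert (E2 := d01_unique f f01 g2 h01 d2).
  split; [exact cf |]. split; [exact (cont_on_ext D f10 g1 oD cg1 E1) |].
  split; [exact (cont_on_ext D f01 g2 oD cg2 E2) |].
  exists g12. split; [exact c12 |]. split; [exact (is_d01_on_ext f10 g1 g12 E1 d12) |].
  apply (is_d10_on_ext f01 g2 g12 E2). intros a b Dab.
  rewrite <- (mixed_partials_eq f g1 g2 g12 g21 d1 d2 d12 d21 c12 c21 a b Dab). apply d21, Dab.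
Qed.

End Smoothness.

Definition C1_on (D : R -> R -> Prop) (f f10 f01 : R -> R -> R) : Prop :=
  cont_on D f /\ cont_on D f10 /\ cont_on D f01 /\ is_d10_on D f f10 /\ is_d01_on D f f01.

Definition symmetric_second_partials (D : R -> R -> Prop) (f10 f01 m : R -> R -> R) : Prop :=
  cont_on D m /\ is_d01_on D f10 m /\ is_d10_on D f01 m.

Lemma C2_on_partials D f f10 f01 : open2 D -> Ck 2 D f ->
  is_d10_on D f f10 -> is_d01_on D f f01 ->
  C1_on D f f10 f01 /\ exists m, symmetric_second_partials D f10 f01 m.
Proof.
  intros oD hf h10 h01. destruct (C2_partials D oD f f10 f01 hf h10 h01) as [c [c10 [c01 hm]]].
  split; [repeat split; assumption | exact hm].
Qed.

Section ProductRules.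
Variable D : R -> R -> Prop.

Lemma is_d10_on_plus f g f' g' : is_d10_on D f f' -> is_d10_on D g g' ->
  is_d10_on D (fun x y => f x y + g x y) (fun x y => f' x y + g' x y).
Proof. intros hf hg a b Dab. apply (derivable_pt_lim_plus (fun x => f x b) (fun x => g x b)); [apply hf | apply hg]; exact Dab. Qed.

Lemma is_d01_on_plus f g f' g' : is_d01_on D f f' -> is_d01_on D g g' ->
  is_d01_on D (fun x y => f x y + g x y) (fun x y => f' x y + g' x y).
Proof. intros hf hg a b Dab. apply (derivable_pt_lim_plus (fun y => f a y) (fun y => g a y)); [apply hf | apply hg]; exact Dab. Qed.

Lemma is_d10_on_mult f g f' g' : is_d10_on D f f' -> is_d10_on D g g' ->
  is_d10_on D (fun x y => f x y * g x y) (fun x y => f' x y * g x y + f x y * g' x y).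
Proof.
  intros hf hg a b Dab.
  apply (derivable_pt_lim_mult (fun x => f x b) (fun x => g x b)); [apply hf | apply hg]; exact Dab.
Qed.

Lemma is_d01_on_mult f g f' g' : is_d01_on D f f' -> is_d01_on D g g' ->
  is_d01_on D (fun x y => f x y * g x y) (fun x y => f' x y * g x y + f x y * g' x y).
Proof.
  intros hf hg a b Dab.
  apply (derivable_pt_lim_mult (fun y => f a y) (fun y => g a y)); [apply hf | apply hg]; exact Dab.
Qed.

Lemma C1_on_opp f f10 f01 : C1_on D f f10 f01 ->
  C1_on D (fun x y => - f x y) (fun x y => - f10 x y) (fun x y => - f01 x y).
Proof.
  intros [c [c10 [c01 [d10 d01]]]].
  split; [apply cont_on_opp, c | split; [apply cont_on_opp, c10 | split; [apply cont_on_opp, c01 |]]].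
  split; intros a b Dab.
  - apply (derivable_pt_lim_opp (fun x => f x b)), d10, Dab.
  - apply (derivable_pt_lim_opp (fun y => f a y)), d01, Dab.
Qed.

End ProductRules.

(* By the symmetry of the second partials of [v], the curl of [c1 dv1 + c2 dv2] only involves
   first partials. *)
Lemma pullback_form_exact D (c1 c2 c1_10 c1_01 c2_10 c2_01 v1 v2 v1_10 v1_01 v2_10 v2_01 m1 m2 : R -> R -> R) :
  simply_connected_domain D ->
  C1_on D c1 c1_10 c1_01 -> C1_on D c2 c2_10 c2_01 ->
  C1_on D v1 v1_10 v1_01 -> C1_on D v2 v2_10 v2_01 ->
  symmetric_second_partials D v1_10 v1_01 m1 -> symmetric_second_partials D v2_10 v2_01 m2 ->
  (forall x y, D x y -> c1_01 x y * v1_10 x y - c1_10 x y * v1_01 x y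
                        + c2_01 x y * v2_10 x y - c2_10 x y * v2_01 x y = 0) ->
  exists F, is_d10_on D F (fun x y => c1 x y * v1_10 x y + c2 x y * v2_10 x y) /\
            is_d01_on D F (fun x y => c1 x y * v1_01 x y + c2 x y * v2_01 x y).
Proof.
  intros hD [cc1 [cc1a [cc1b [dc1a dc1b]]]] [cc2 [cc2a [cc2b [dc2a dc2b]]]]
    [_ [cv1a [cv1b _]]] [_ [cv2a [cv2b _]]] [cm1 [dm1a dm1b]] [cm2 [dm2a dm2b]] curl.
  apply (closed_form_exact D _ _
    (fun x y => c1_01 x y * v1_10 x y + c1 x y * m1 x y + (c2_01 x y * v2_10 x y + c2 x y * m2 x y))
    (fun x y => c1_10 x y * v1_01 x y + c1 x y * m1 x y + (c2_10 x y * v2_01 x y + c2 x y * m2 x y)));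
  repeat first [assumption | apply cont_on_plus | apply cont_on_mult |
                apply is_d10_on_plus | apply is_d01_on_plus | apply is_d10_on_mult | apply is_d01_on_mult].
  intros x y Dxy. specialize (curl x y Dxy). lra.
Qed.

(** * The rotating flow *)

Definition rot1 (a x y : R) : R := cos a * x - sin a * y.
Definition rot2 (a x y : R) : R := sin a * x + cos a * y.

Lemma cos_sin_sq a : cos a ^ 2 + sin a ^ 2 = 1.
Proof. rewrite <- (sin2_cos2 a). unfold Rsqr. ring. Qed.

(* The two brackets multiplied by [cos (B - A)] and [sin (B - A)] are the left-hand sides of the
   system of the theorem. *)
Lemma rotation_sum_det A B v110 v101 v210 v201 w110 w101 w210 w201 :
  (rot1 A v110 v210 + rot1 B w110 w210) * (rot2 A v101 v201 + rot2 B w101 w201)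
  - (rot1 A v101 v201 + rot1 B w101 w201) * (rot2 A v110 v210 + rot2 B w110 w210)
  = (v110 * v201 - v101 * v210) + (w110 * w201 - w101 * w210)
    + cos (B - A) * (w110 * v201 - w101 * v210 - w210 * v101 + w201 * v110)
    - sin (B - A) * (w210 * v201 - w201 * v210 + w110 * v101 - w101 * v110).
Proof.
  unfold rot1, rot2. rewrite cos_minus, sin_minus.
  transitivity ((cos A ^ 2 + sin A ^ 2) * (v110 * v201 - v101 * v210)
    + (cos B ^ 2 + sin B ^ 2) * (w110 * w201 - w101 * w210)
    + (cos B * cos A + sin B * sin A) * (w110 * v201 - w101 * v210 - w210 * v101 + w201 * v110)
    - (sin B * cos A - cos B * sin A) * (w210 * v201 - w201 * v210 + w110 * v101 - w101 * v110));
    [ring | rewrite !cos_sin_sq; ring].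
Qed.

Definition accel1 (mu theta t v1 v2 w1 w2 : R) : R :=
  - (mu ^ 2 * rot1 (mu * t) v1 v2 + theta ^ 2 * rot1 (theta * t) w1 w2).
Definition accel2 (mu theta t v1 v2 w1 w2 : R) : R :=
  - (mu ^ 2 * rot2 (mu * t) v1 v2 + theta ^ 2 * rot2 (theta * t) w1 w2).

(* [g1] and [g2] stand for the values of potentials of [w . dv] and [(J w) . dv], [J] the rotation by
   a right angle. *)
Definition pressure_value (mu theta t v1 v2 w1 w2 g1 g2 : R) : R :=
  mu ^ 2 * (v1 ^ 2 + v2 ^ 2) / 2 + theta ^ 2 * (w1 ^ 2 + w2 ^ 2) / 2
  + mu ^ 2 * (cos ((theta - mu) * t) * (v1 * w1 + v2 * w2) + sin ((theta - mu) * t) * (v2 * w1 - v1 * w2))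
  + (theta ^ 2 - mu ^ 2) * (cos ((theta - mu) * t) * g1 + sin ((theta - mu) * t) * g2).

Definition euler_pressure (mu theta : R) (v1 v2 w1 w2 F1 F2 : R -> R -> R) (t x y : R) : R :=
  pressure_value mu theta t (v1 x y) (v2 x y) (w1 x y) (w2 x y) (F1 x y) (F2 x y).

Ltac Derive_known := repeat match goal with |- context [Derive ?f ?x] =>
   match goal with H : is_derive _ x _ |- _ => rewrite (is_derive_unique f x _ H) end end.
Ltac derive_from_hyps := auto_derive; [repeat split; try (eexists; eassumption) | Derive_known].

Section Slices.
Variables (V1 V2 W1 W2 : R -> R) (z dv1 dv2 dw1 dw2 : R).
Hypotheses (hV1 : is_derive V1 z dv1) (hV2 : is_derive V2 z dv2)
  (hW1 : is_derive W1 z dw1) (hW2 : is_derive W2 z dw2).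

Lemma rot1_sum_slice A B :
  derivable_pt_lim (fun s => rot1 A (V1 s) (V2 s) + rot1 B (W1 s) (W2 s)) z (rot1 A dv1 dv2 + rot1 B dw1 dw2).
Proof. apply is_derive_Reals. unfold rot1. derive_from_hyps. ring. Qed.

Lemma rot2_sum_slice A B :
  derivable_pt_lim (fun s => rot2 A (V1 s) (V2 s) + rot2 B (W1 s) (W2 s)) z (rot2 A dv1 dv2 + rot2 B dw1 dw2).
Proof. apply is_derive_Reals. unfold rot2. derive_from_hyps. ring. Qed.

Lemma pressure_slice mu theta t (G1 G2 : R -> R) :
  is_derive G1 z (W1 z * dv1 + W2 z * dv2) -> is_derive G2 z (- W2 z * dv1 + W1 z * dv2) ->
  derivable_pt_lim (fun s => pressure_value mu theta t (V1 s) (V2 s) (W1 s) (W2 s) (G1 s) (G2 s)) z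
    (- ((rot1 (mu * t) dv1 dv2 + rot1 (theta * t) dw1 dw2) * accel1 mu theta t (V1 z) (V2 z) (W1 z) (W2 z)
      + (rot2 (mu * t) dv1 dv2 + rot2 (theta * t) dw1 dw2) * accel2 mu theta t (V1 z) (V2 z) (W1 z) (W2 z))).
Proof.
  intros hG1 hG2. apply is_derive_Reals. unfold pressure_value, accel1, accel2, rot1, rot2.
  derive_from_hyps.
  replace ((theta - mu) * t) with (theta * t - mu * t) by ring. rewrite cos_minus, sin_minus.
  match goal with |- ?L = ?R =>
    transitivity (R + mu ^ 2 * (1 - (cos (mu * t) ^ 2 + sin (mu * t) ^ 2)) * (V1 z * dv1 + V2 z * dv2)
                    + theta ^ 2 * (1 - (cos (theta * t) ^ 2 + sin (theta * t) ^ 2)) * (W1 z * dw1 + W2 z * dw2))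
  end; [field | rewrite !cos_sin_sq; ring].
Qed.

End Slices.

Section EulerFlow.
Variables (D : R -> R -> Prop) (mu theta : R) (v1 v2 w1 w2 v1_10 v1_01 v2_10 v2_01 w1_10 w1_01 w2_10 w2_01 : R -> R -> R).
Hypotheses (dv1a : is_d10_on D v1 v1_10) (dv1b : is_d01_on D v1 v1_01)
  (dv2a : is_d10_on D v2 v2_10) (dv2b : is_d01_on D v2 v2_01)
  (dw1a : is_d10_on D w1 w1_10) (dw1b : is_d01_on D w1 w1_01)
  (dw2a : is_d10_on D w2 w2_10) (dw2b : is_d01_on D w2 w2_01).

Lemma phi1_d10 t a1 a2 : D a1 a2 ->
  has_d10_at (phi1 mu theta v1 v2 w1 w2 t) a1 a2 (phi1 mu theta v1_10 v2_10 w1_10 w2_10 t a1 a2).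
Proof.
  intros Dz. apply rot1_sum_slice; apply is_derive_Reals; [apply dv1a | apply dv2a | apply dw1a | apply dw2a]; exact Dz.
Qed.

Lemma phi1_d01 t a1 a2 : D a1 a2 ->
  has_d01_at (phi1 mu theta v1 v2 w1 w2 t) a1 a2 (phi1 mu theta v1_01 v2_01 w1_01 w2_01 t a1 a2).
Proof.
  intros Dz. apply rot1_sum_slice; apply is_derive_Reals; [apply dv1b | apply dv2b | apply dw1b | apply dw2b]; exact Dz.
Qed.

Lemma phi2_d10 t a1 a2 : D a1 a2 ->
  has_d10_at (phi2 mu theta v1 v2 w1 w2 t) a1 a2 (phi2 mu theta v1_10 v2_10 w1_10 w2_10 t a1 a2).
Proof.
  intros Dz. apply rot2_sum_slice; apply is_derive_Reals; [apply dv1a | apply dv2a | apply dw1a | apply dw2a]; exact Dz.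
Qed.

Lemma phi2_d01 t a1 a2 : D a1 a2 ->
  has_d01_at (phi2 mu theta v1 v2 w1 w2 t) a1 a2 (phi2 mu theta v1_01 v2_01 w1_01 w2_01 t a1 a2).
Proof.
  intros Dz. apply rot2_sum_slice; apply is_derive_Reals; [apply dv1b | apply dv2b | apply dw1b | apply dw2b]; exact Dz.
Qed.

Lemma phi_jacobian_det t a1 a2 :
  phi1 mu theta v1_10 v2_10 w1_10 w2_10 t a1 a2 * phi2 mu theta v1_01 v2_01 w1_01 w2_01 t a1 a2
  - phi1 mu theta v1_01 v2_01 w1_01 w2_01 t a1 a2 * phi2 mu theta v1_10 v2_10 w1_10 w2_10 t a1 a2
  = (v1_10 a1 a2 * v2_01 a1 a2 - v1_01 a1 a2 * v2_10 a1 a2)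
    + (w1_10 a1 a2 * w2_01 a1 a2 - w1_01 a1 a2 * w2_10 a1 a2)
    + cos (theta * t - mu * t) * (w1_10 a1 a2 * v2_01 a1 a2 - w1_01 a1 a2 * v2_10 a1 a2
                                  - w2_10 a1 a2 * v1_01 a1 a2 + w2_01 a1 a2 * v1_10 a1 a2)
    - sin (theta * t - mu * t) * (w2_10 a1 a2 * v2_01 a1 a2 - w2_01 a1 a2 * v2_10 a1 a2
                                  + w1_10 a1 a2 * v1_01 a1 a2 - w1_01 a1 a2 * v1_10 a1 a2).
Proof. apply rotation_sum_det. Qed.

Lemma phi1_second_deriv t a1 a2 : has_second_deriv (fun s => phi1 mu theta v1 v2 w1 w2 s a1 a2) t
  (accel1 mu theta t (v1 a1 a2) (v2 a1 a2) (w1 a1 a2) (w2 a1 a2)).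
Proof.
  exists (fun s => - (mu * rot2 (mu * s) (v1 a1 a2) (v2 a1 a2) + theta * rot2 (theta * s) (w1 a1 a2) (w2 a1 a2))).
  split; [intros s |]; apply is_derive_Reals; unfold phi1, accel1, rot1, rot2;
    auto_derive; auto; ring.
Qed.

Lemma phi2_second_deriv t a1 a2 : has_second_deriv (fun s => phi2 mu theta v1 v2 w1 w2 s a1 a2) t
  (accel2 mu theta t (v1 a1 a2) (v2 a1 a2) (w1 a1 a2) (w2 a1 a2)).
Proof.
  exists (fun s => mu * rot1 (mu * s) (v1 a1 a2) (v2 a1 a2) + theta * rot1 (theta * s) (w1 a1 a2) (w2 a1 a2)).
  split; [intros s |]; apply is_derive_Reals; unfold phi2, accel2, rot1, rot2;
    auto_derive; auto; ring.
Qed.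

Section Pressure.
Variables (F1 F2 : R -> R -> R).

Lemma euler_pressure_d10 t a1 a2 :
  is_d10_on D F1 (fun x y => w1 x y * v1_10 x y + w2 x y * v2_10 x y) ->
  is_d10_on D F2 (fun x y => - w2 x y * v1_10 x y + w1 x y * v2_10 x y) -> D a1 a2 ->
  has_d10_at (euler_pressure mu theta v1 v2 w1 w2 F1 F2 t) a1 a2
    (- (phi1 mu theta v1_10 v2_10 w1_10 w2_10 t a1 a2 * accel1 mu theta t (v1 a1 a2) (v2 a1 a2) (w1 a1 a2) (w2 a1 a2)
      + phi2 mu theta v1_10 v2_10 w1_10 w2_10 t a1 a2 * accel2 mu theta t (v1 a1 a2) (v2 a1 a2) (w1 a1 a2) (w2 a1 a2))).
Proof.
  intros hF1 hF2 Dz. apply (pressure_slice (fun x => v1 x a2) (fun x => v2 x a2) (fun x => w1 x a2) (fun x => w2 x a2));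
    apply is_derive_Reals; [apply dv1a | apply dv2a | apply dw1a | apply dw2a | apply hF1 | apply hF2]; exact Dz.
Qed.

Lemma euler_pressure_d01 t a1 a2 :
  is_d01_on D F1 (fun x y => w1 x y * v1_01 x y + w2 x y * v2_01 x y) ->
  is_d01_on D F2 (fun x y => - w2 x y * v1_01 x y + w1 x y * v2_01 x y) -> D a1 a2 ->
  has_d01_at (euler_pressure mu theta v1 v2 w1 w2 F1 F2 t) a1 a2
    (- (phi1 mu theta v1_01 v2_01 w1_01 w2_01 t a1 a2 * accel1 mu theta t (v1 a1 a2) (v2 a1 a2) (w1 a1 a2) (w2 a1 a2)
      + phi2 mu theta v1_01 v2_01 w1_01 w2_01 t a1 a2 * accel2 mu theta t (v1 a1 a2) (v2 a1 a2) (w1 a1 a2) (w2 a1 a2))).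
Proof.
  intros hF1 hF2 Dz. apply (pressure_slice (fun y => v1 a1 y) (fun y => v2 a1 y) (fun y => w1 a1 y) (fun y => w2 a1 y));
    apply is_derive_Reals; [apply dv1b | apply dv2b | apply dw1b | apply dw2b | apply hF1 | apply hF2]; exact Dz.
Qed.

End Pressure.

End EulerFlow.

Theorem theorem5p1
  (D : R -> R -> Prop) (mu theta : R)
  (v1 v2 w1 w2 : R -> R -> R)
  (v1_10 v1_01 v2_10 v2_01 w1_10 w1_01 w2_10 w2_01 : R -> R -> R)
  (hD : simply_connected_domain D)
  (hmt : mu <> theta)
  (sv1 : smooth_on D v1) (sv2 : smooth_on D v2)
  (sw1 : smooth_on D w1) (sw2 : smooth_on D w2)
  (dv1a : is_d10_on D v1 v1_10) (dv1b : is_d01_on D v1 v1_01)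
  (dv2a : is_d10_on D v2 v2_10) (dv2b : is_d01_on D v2 v2_01)
  (dw1a : is_d10_on D w1 w1_10) (dw1b : is_d01_on D w1 w1_01)
  (dw2a : is_d10_on D w2 w2_10) (dw2b : is_d01_on D w2 w2_01)
  (sys1 : forall a1 a2, D a1 a2 ->
     w1_10 a1 a2 * v2_01 a1 a2 - w1_01 a1 a2 * v2_10 a1 a2
     - w2_10 a1 a2 * v1_01 a1 a2 + w2_01 a1 a2 * v1_10 a1 a2 = 0)
  (sys2 : forall a1 a2, D a1 a2 ->
     w2_10 a1 a2 * v2_01 a1 a2 - w2_01 a1 a2 * v2_10 a1 a2
     + w1_10 a1 a2 * v1_01 a1 a2 - w1_01 a1 a2 * v1_10 a1 a2 = 0)
  (hdet : forall a1 a2, D a1 a2 ->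
     (v1_10 a1 a2 * v2_01 a1 a2 - v1_01 a1 a2 * v2_10 a1 a2)
     + (w1_10 a1 a2 * w2_01 a1 a2 - w1_01 a1 a2 * w2_10 a1 a2) <> 0) :
  (forall t a1 a2, D a1 a2 ->
     exists a b c d,
       has_d10_at (phi1 mu theta v1 v2 w1 w2 t) a1 a2 a /\
       has_d01_at (phi1 mu theta v1 v2 w1 w2 t) a1 a2 b /\
       has_d10_at (phi2 mu theta v1 v2 w1 w2 t) a1 a2 c /\
       has_d01_at (phi2 mu theta v1 v2 w1 w2 t) a1 a2 d /\
       a * d - b * c =
       (v1_10 a1 a2 * v2_01 a1 a2 - v1_01 a1 a2 * v2_10 a1 a2)
       + (w1_10 a1 a2 * w2_01 a1 a2 - w1_01 a1 a2 * w2_10 a1 a2)) /\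
  (exists p : R -> R -> R -> R,
     forall t a1 a2, D a1 a2 ->
     exists a b c d acc1 acc2,
       has_d10_at (phi1 mu theta v1 v2 w1 w2 t) a1 a2 a /\
       has_d01_at (phi1 mu theta v1 v2 w1 w2 t) a1 a2 b /\
       has_d10_at (phi2 mu theta v1 v2 w1 w2 t) a1 a2 c /\
       has_d01_at (phi2 mu theta v1 v2 w1 w2 t) a1 a2 d /\
       has_second_deriv (fun s => phi1 mu theta v1 v2 w1 w2 s a1 a2) t acc1 /\
       has_second_deriv (fun s => phi2 mu theta v1 v2 w1 w2 s a1 a2) t acc2 /\
       has_d10_at (p t) a1 a2 (- (a * acc1 + c * acc2)) /\
       has_d01_at (p t) a1 a2 (- (b * acc1 + d * acc2))).
Proof.
  assert (oD : open2 D) by apply hD.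
  destruct (C2_on_partials D v1 v1_10 v1_01 oD (sv1 2%nat) dv1a dv1b) as [Cv1 [m1 Sv1]].
  destruct (C2_on_partials D v2 v2_10 v2_01 oD (sv2 2%nat) dv2a dv2b) as [Cv2 [m2 Sv2]].
  destruct (C2_on_partials D w1 w1_10 w1_01 oD (sw1 2%nat) dw1a dw1b) as [Cw1 _].
  destruct (C2_on_partials D w2 w2_10 w2_01 oD (sw2 2%nat) dw2a dw2b) as [Cw2 _].
  destruct (pullback_form_exact D w1 w2 w1_10 w1_01 w2_10 w2_01 v1 v2 v1_10 v1_01 v2_10 v2_01 m1 m2
              hD Cw1 Cw2 Cv1 Cv2 Sv1 Sv2) as [F1 [dF1a dF1b]].
  { intros x y Dxy. specialize (sys2 x y Dxy). lra. }
  destruct (pullback_form_exact D _ w1 _ _ w1_10 w1_01 v1 v2 v1_10 v1_01 v2_10 v2_01 m1 m2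
              hD (C1_on_opp D w2 w2_10 w2_01 Cw2) Cw1 Cv1 Cv2 Sv1 Sv2) as [F2 [dF2a dF2b]].
  { intros x y Dxy. specialize (sys1 x y Dxy). lra. }
  split.
  - intros t a1 a2 Dz. do 4 eexists.
    split; [eapply phi1_d10; eassumption |]. split; [eapply phi1_d01; eassumption |].
    split; [eapply phi2_d10; eassumption |]. split; [eapply phi2_d01; eassumption |].
    rewrite phi_jacobian_det, sys1, sys2 by exact Dz. ring.
  - exists (euler_pressure mu theta v1 v2 w1 w2 F1 F2). intros t a1 a2 Dz. do 6 eexists.
    split; [eapply phi1_d10; eassumption |]. split; [eapply phi1_d01; eassumption |].
    split; [eapply phi2_d10; eassumption |]. split; [eapply phi2_d01; eassumption |].
    split; [apply phi1_second_deriv |]. split; [apply phi2_second_deriv |].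
    split; [eapply euler_pressure_d10 | eapply euler_pressure_d01]; eassumption.
Qed.
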